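(* Let $G$ be a connected graph with $n\ge 2$ vertices and let $k$ be an integer. The following statements are equivalent: (1) there is a GS ordering of $G$ whose $\mathcal{F}$-tree has at most $k$ leaves; (2) there is a $Z^*$-forcing set of $G$ of size at most $k$; (3) there is a generic $Z$-sequence of $G$ of length at least $n-k$.
   Context: All graphs are finite, simple, undirected, connected and non-empty; $N(v)$ is the open and $N[v]=N(v)\cup\{v\}$ the closed neighborhood. A GS ordering of $G$ is an ordering $(v_1,\dots,v_n)$ of $V(G)$ such that every $v_i$ with $i>1$ has a neighbor among $v_1,\dots,v_{i-1}$. Its $\mathcal{F}$-tree is the spanning tree rooted at $v_1$ where the parent of $v_i$ ($i>1$) is its leftmost neighbor in the ordering; a leaf is a non-root vertex without children (the root is never a leaf). A generic $Z$-sequence of $G$ is a sequence $(v_1,\dots,v_\ell)$ of distinct vertices that is a prefix of some GS ordering of $G$ and satisfies $N(v_i)\setminus\bigcup_{j=1}^{i-1}N[v_j]\neq\emptyset$ for all $i\in\{1,\dots,\ell\}$. $Z^*$-rule: if $v$ is a blue vertex that has exactly one white neighbor $w$, and either $w$ is the only white vertex of $G$ or $w$ has at least one white neighbor, then $w$ may be colored blue. A set $S\subseteq V(G)$ is a $Z^*$-forcing set if, coloring $S$ blue and all other vertices white and then iteratively applying the $Z^*$-rule, all vertices of $G$ can be colored blue. *)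

From mathcomp Require Import all_boot all_order all_algebra.
Set Implicit Arguments. Unset Strict Implicit. Unset Printing Implicit Defensive.

Definition simple_graph (T : finType) (e : rel T) : Prop :=
  symmetric e /\ irreflexive e.

Definition connected_graph (T : finType) (e : rel T) : Prop :=
  forall x y : T, connect e x y.

Section Defs.
Variables (T : finType) (e : rel T).

Definition earlier_neighbor (s : seq T) : Prop :=
  forall (p : seq T) (v : T) (q : seq T), s = p ++ v :: q -> p != [::] -> has (e v) p.

Definition GS_ordering (s : seq T) : Prop :=
  [/\ uniq s, (forall v : T, v \in s) & earlier_neighbor s].

Definition F_parent (s : seq T) (w : T) : T := nth w s (find (e w) s).

(* Leaves of the F-tree: non-root vertices (entries of behead s) that are
   the parent of no non-root vertex. *)
Definition F_leaves (s : seq T) : {set T} :=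
  [set v | (v \in behead s) && ~~ has (fun w => F_parent s w == v) (behead s)].

Definition zstar_force (B : {set T}) (v w : T) : bool :=
  [&& v \in B, w \notin B, e v w,
      [forall u, (e v u && (u \notin B)) ==> (u == w)] &
      ((~: B == [set w]) || [exists u, e w u && (u \notin B)])].

Inductive zstar_reach (S : {set T}) : {set T} -> Prop :=
| zr_init : zstar_reach S S
| zr_step (B : {set T}) (v w : T) :
    zstar_reach S B -> zstar_force B v w -> zstar_reach S (w |: B).

Definition zstar_forcing_set (S : {set T}) : Prop := zstar_reach S [set: T].

Definition generic_Z_sequence (s : seq T) : Prop :=
  [/\ uniq s,
      (exists t : seq T, GS_ordering t /\ prefix s t) &
      (forall (p : seq T) (v : T) (q : seq T), s = p ++ v :: q ->
         exists u : T, e v u /\ (forall x, x \in p -> (u != x) && ~~ e x u))].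

End Defs.

From mathcomp Require Import all_boot all_order all_algebra.
From mathcomp Require Import zify.
Import Order.TTheory GRing.Theory Num.Theory.

Set Implicit Arguments. Unset Strict Implicit. Unset Printing Implicit Defensive.

(* Leaves of an F-tree form a Z*-forcing set: walking the GS ordering backwards,
   a vertex v that is not a leaf is the F-parent of some later vertex c, whose
   other neighbours all come after v, so c forces v; the Z* side condition is
   witnessed by the F-parent of v, or v is the root and the last white vertex.
   Reading a forcing chain backwards gives a generic Z-sequence: the vertex that
   forces w is the new neighbour required of w, the white neighbour demanded by
   the Z* rule is an earlier neighbour of w, and connectivity extends the result
   to a GS ordering.  Conversely, in a GS ordering extending a generic
   Z-sequence, the new neighbour of each entry v is an F-child of v, so no entry
   is a leaf. *)

Lemma rcons_eq_cat_cons (A : Type) (s p q : seq A) w v :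
  rcons s w = p ++ v :: q -> (p = s /\ v = w) \/ exists q', s = p ++ v :: q'.
Proof.
case/lastP: q => [|q' x]; first by rewrite cats1 => /rcons_inj [-> ->]; left.
by rewrite -rcons_cons -rcons_cat => /rcons_inj [-> _]; right; exists q'.
Qed.

Lemma mem_behead_index (A : eqType) (s : seq A) x :
  uniq s -> x \in s -> (x \in behead s) = (0 < index x s).
Proof.
case: s => [//|y s] /= /andP [ys _]; rewrite inE eq_sym.
by case: eqP => [<- | _] //=; rewrite (negbTE ys).
Qed.

Section Graph.
Variables (T : finType) (e : rel T).
Hypothesis e_sym : symmetric e.
Hypothesis e_irr : irreflexive e.
Hypothesis e_conn : connected_graph e.

Lemma earlier_neighbor1 x : earlier_neighbor e [:: x].
Proof. by case=> [|a [|b p]] v q. Qed.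

Lemma earlier_neighbor_rcons s w :
  earlier_neighbor e s -> (s != [::] -> has (e w) s) -> earlier_neighbor e (rcons s w).
Proof.
move=> en_s w_s p v q /(@rcons_eq_cat_cons T) [[-> ->] | [q' /en_s //]].
exact: w_s.
Qed.

Lemma edge_out (A : {pred T}) x y :
  x \in A -> y \notin A -> exists z w, [/\ z \in A, w \notin A & e z w].
Proof.
move=> xA yA.
case: (pickP (fun zw : T * T => [&& zw.1 \in A, zw.2 \notin A & e zw.1 zw.2])).
  by move=> [z w] /and3P [zA wA ezw]; exists z, w.
move=> noedge; suff A_closed : closed e A.
  by move: yA; rewrite -(closed_connect A_closed (e_conn x y)) xA.
have out z w : z \in A -> e z w -> w \in A.
  by move=> zA ezw; have := noedge (z, w); rewrite /= zA ezw andbT => /negbFE.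
by move=> z w ezw; apply/idP/idP => /out; apply; rewrite // e_sym.
Qed.

Lemma has_neighbor_of_card x : 1 < #|T| -> exists y, e x y.
Proof.
move=> card_T; have [y yx] : exists y, y \notin pred1 x.
  apply/existsP; apply: contraTT card_T => /existsPn all_x; rewrite -leqNgt.
  by rewrite -(card1 x); apply: subset_leq_card; apply/subsetP => z _; exact/negbNE/all_x.
have [z [w [/eqP-> _ exw]]] := @edge_out (pred1 x) x y (eqxx x) yx.
by exists w.
Qed.

Lemma GS_ordering_extend s :
  uniq s -> earlier_neighbor e s -> s != [::] -> exists t, GS_ordering e t /\ prefix s t.
Proof.
have [m] := ubnP (#|T| - size s); elim: m s => // m IH s lt_m s_uniq s_en s_ne.
case: (boolP [forall x, x \in s]) => [/forallP s_all | /forallPn [y ys]].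
  by exists s; split; [split | exact: prefix_refl].
have /hasP [x0 x0s _] : has predT s by rewrite has_predT lt0n size_eq0.
have [z [x [zs xs ezx]]] := edge_out x0s ys.
have sx_uniq : uniq (rcons s x) by rewrite rcons_uniq xs.
have sx_en : earlier_neighbor e (rcons s x).
  by apply: earlier_neighbor_rcons => // _; apply/hasP; exists z; rewrite // e_sym.
have s_lt : size s < #|T|.
  by rewrite -(size_rcons s x) -(card_uniqP sx_uniq) max_card.
have [||t [t_GS sx_t]] := IH (rcons s x) _ sx_uniq sx_en.
- by rewrite size_rcons; lia.
- by rewrite -size_eq0 size_rcons.
by exists t; split; last exact: prefix_trans (prefix_rcons s x) sx_t.
Qed.

Section FTree.
Variable t : seq T.
Hypothesis t_GS : GS_ordering e t.

Local Notation pos x := (index x t).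
Local Notation parent := (F_parent e t).
Local Notation leaves := (F_leaves e t).

Let t_uniq : uniq t. Proof. by case: t_GS. Qed.
Let mem_t x : x \in t. Proof. by case: t_GS. Qed.

Lemma pos_inj : injective (index^~ t).
Proof. by move=> x y pos_xy; rewrite -(nth_index x (mem_t x)) pos_xy nth_index. Qed.

Lemma pos_onto i : i < size t -> exists v, pos v = i.
Proof.
case: t t_uniq => // v0 s s_uniq lt_i.
by exists (nth v0 (v0 :: s) i); rewrite index_uniq.
Qed.

Lemma mem_behead_pos x : (x \in behead t) = (0 < pos x).
Proof. exact: mem_behead_index. Qed.

Lemma find_lt_pos c : 0 < pos c -> find (e c) t < pos c.
Proof.
move=> pos_c; have [_ _ t_en] := t_GS.
have lt_c : pos c < size t by rewrite index_mem.
have size_p : size (take (pos c) t) = pos c by rewrite size_takel // ltnW.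
have has_p : has (e c) (take (pos c) t).
  apply: (t_en _ c (drop (pos c).+1 t)); last by rewrite -size_eq0 size_p -lt0n.
  by rewrite -{1}(cat_take_drop (pos c) t) (drop_nth c lt_c) nth_index.
rewrite -{1}(cat_take_drop (pos c) t) find_cat has_p.
by move: has_p; rewrite has_find size_p.
Qed.

Lemma pos_F_parent c : has (e c) t -> pos (parent c) = find (e c) t.
Proof. by rewrite has_find => lt_f; rewrite /F_parent index_uniq. Qed.

Lemma F_parent_adj c : has (e c) t -> e c (parent c).
Proof. exact: nth_find. Qed.

Lemma F_parent_leftmost c u : e c u -> pos (parent c) <= pos u.
Proof.
move=> ecu; have has_c : has (e c) t by apply/hasP; exists u; rewrite ?mem_t.
rewrite pos_F_parent // leqNgt; apply/negP => /(before_find u).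
by rewrite nth_index ?mem_t // ecu.
Qed.

Lemma has_neighbor_nonroot c : 0 < pos c -> has (e c) t.
Proof. by move=> /find_lt_pos lt_f; rewrite has_find (ltn_trans lt_f) ?index_mem. Qed.

Lemma F_parent_lt c : 0 < pos c -> pos (parent c) < pos c.
Proof. by move=> pos_c; rewrite pos_F_parent ?find_lt_pos ?has_neighbor_nonroot. Qed.

Lemma F_parent_notin_leaves c : 0 < pos c -> parent c \notin leaves.
Proof.
move=> pos_c; rewrite inE negb_and negbK; apply/orP; right.
by apply/hasP; exists c; rewrite ?mem_behead_pos.
Qed.

Lemma child_of_nonleaf v : (exists y, e v y) -> v \notin leaves ->
  exists2 c, 0 < pos c & parent c = v.
Proof.
move=> [y evy]; rewrite inE mem_behead_pos negb_and negbK.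
case: posnP => [pos_v | _ /hasP [c]]; last by rewrite mem_behead_pos => pos_c /eqP; exists c.
have pos_y : 0 < pos y.
  by rewrite lt0n -pos_v; apply: contraTneq evy => /pos_inj ->; rewrite e_irr.
exists y => //; apply: pos_inj; apply/eqP; rewrite pos_v -leqn0 -pos_v.
by apply: F_parent_leftmost; rewrite e_sym.
Qed.

Local Notation blue i := (leaves :|: [set x | i <= pos x]).

Lemma in_blue i x : (x \in blue i) = (x \in leaves) || (i <= pos x).
Proof. by rewrite in_setU; congr (_ || _); apply: in_set. Qed.

Lemma blue_pos v : blue (pos v) = v |: blue (pos v).+1.
Proof.
apply/setP => x; rewrite in_setU1 !in_blue leq_eqVlt (inj_eq pos_inj).
by rewrite orbA (orbC _ (v == x)) -orbA eq_sym.
Qed.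

Lemma force_to_parent c :
  0 < pos c -> zstar_force e (blue (pos (parent c)).+1) c (parent c).
Proof.
move=> pos_c; have lt_vc := F_parent_lt pos_c; have vL := F_parent_notin_leaves pos_c.
apply/and5P; split.
- by rewrite in_blue lt_vc orbT.
- by rewrite in_blue negb_or vL ltnn.
- exact/F_parent_adj/has_neighbor_nonroot.
- apply/forallP => u; apply/implyP => /andP [ecu].
  rewrite in_blue negb_or -ltnNge ltnS => /andP [_ le_u].
  by apply/eqP/pos_inj/eqP; rewrite eqn_leq le_u F_parent_leftmost.
have [pos_v | pos_v] := posnP (pos (parent c)).
  apply/orP; left; apply/eqP/setP => x.
  rewrite in_setC in_set1 in_blue negb_or -ltnNge ltnS pos_v leqn0 -pos_v (inj_eq pos_inj).
  by case: eqP => [-> | _]; rewrite ?vL ?andbF.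
apply/orP; right; apply/existsP; exists (parent (parent c)).
rewrite F_parent_adj ?has_neighbor_nonroot //= in_blue negb_or.
by rewrite F_parent_notin_leaves //= -ltnNge ltnS ltnW // F_parent_lt.
Qed.

Lemma reach_blue_pos v : (exists y, e v y) ->
  zstar_reach e leaves (blue (pos v).+1) -> zstar_reach e leaves (blue (pos v)).
Proof.
move=> v_nbr reach_v; rewrite blue_pos.
case: (boolP (v \in leaves)) => vL.
  by rewrite (setUidPr _) // sub1set in_setU vL.
have [c pos_c par_c] := child_of_nonleaf v_nbr vL.
by rewrite -par_c in reach_v *; apply: zr_step reach_v (force_to_parent pos_c).
Qed.

Lemma F_leaves_forcing : (forall x, exists y, e x y) -> zstar_forcing_set e leaves.
Proof.
move=> nbr; have reach_i i : zstar_reach e leaves (blue (size t - i)).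
  elim: i => [|i IH].
    rewrite subn0 (_ : blue _ = leaves); first exact: zr_init.
    by apply/setP => x; rewrite in_blue leqNgt index_mem mem_t orbF.
  have [lt_i | ge_i] := ltnP i (size t); last by rewrite (_ : _ - _ = size t - i) //; lia.
  have [|v pos_v] := @pos_onto (size t - i.+1); first lia.
  rewrite -pos_v; apply: reach_blue_pos; rewrite // pos_v.
  by rewrite (_ : _.+1 = size t - i) //; lia.
have := reach_i (size t); rewrite subnn (_ : blue 0 = setT) //.
by apply/setP => x; rewrite in_blue in_setT orbT.
Qed.

End FTree.

Definition generic_condition (s : seq T) : Prop :=
  forall p v q, s = p ++ v :: q ->
    exists u, e v u /\ (forall x, x \in p -> (u != x) && ~~ e x u).

Lemma F_parent_cat p v r u : ~~ has (e u) p -> e u v -> F_parent e (p ++ v :: r) u = v.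
Proof. by move=> /negbTE pu uv; rewrite /F_parent find_cat pu /= uv addn0 nth_cat ltnn subnn. Qed.

Lemma generic_not_leaf t s : GS_ordering e t -> prefix s t -> generic_condition s ->
  {in s, forall v, v \notin F_leaves e t}.
Proof.
move=> [_ mem_t _] /prefixP [r def_t] s_gen v vs.
case/splitPr: vs s_gen def_t => p q s_gen def_t.
have [u [evu u_new]] := s_gen p v q erefl.
have pu : ~~ has (e u) p by apply/hasPn => x /u_new /andP [_]; rewrite e_sym.
have par_u : F_parent e t u = v by rewrite def_t -catA F_parent_cat // e_sym.
have u_nonroot : u \in behead t.
  move: (mem_t u) u_new; rewrite def_t; case: p {s_gen pu def_t} => [|x p] /=.
    by rewrite inE => /orP [/eqP eq_u | //]; move: evu; rewrite eq_u e_irr.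
  by rewrite inE => /orP [/eqP -> /(_ x (mem_head x p)) | //]; rewrite eqxx.
by rewrite inE negb_and negbK; apply/orP; right; apply/hasP; exists u; rewrite ?par_u.
Qed.

Lemma leaves_add_generic_le t s : GS_ordering e t -> prefix s t -> uniq s ->
  generic_condition s -> #|F_leaves e t| + size s <= #|T|.
Proof.
move=> t_GS s_t s_uniq s_gen; rewrite -(card_uniqP s_uniq) -(cardC (mem s)) addnC leq_add2l.
apply/subset_leq_card/subsetP => x xL; rewrite inE; apply: contraL xL => xs.
exact: generic_not_leaf xs.
Qed.

Definition reverse_forcing_seq (B : {set T}) (s : seq T) : Prop :=
  [/\ uniq s, s =i ~: B, earlier_neighbor e s & generic_condition s].

Lemma reverse_forcing_seq_force B v w s : zstar_force e B v w ->
  reverse_forcing_seq (w |: B) s -> reverse_forcing_seq B (rcons s w).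
Proof.
case/and5P => vB wB evw v_white w_cond [s_uniq s_white s_en s_gen].
have mem_s x : (x \in s) = (x != w) && (x \notin B).
  by rewrite s_white in_setC in_setU1 negb_or.
split.
- by rewrite rcons_uniq mem_s eqxx s_uniq.
- by move=> x; rewrite mem_rcons in_cons mem_s in_setC; case: eqP => [-> | ].
- apply: earlier_neighbor_rcons => // s_ne.
  case/orP: w_cond => [/eqP B_w | /existsP [u /andP [ewu uB]]].
    case: s s_ne mem_s {s_uniq s_white s_en s_gen} => // x s _ /(_ x).
    by rewrite mem_head -in_setC B_w in_set1 => /esym /andP [/negbTE ->].
  apply/hasP; exists u => //; rewrite mem_s uB andbT.
  by apply: contraTneq ewu => ->; rewrite e_irr.
move=> p u q /(@rcons_eq_cat_cons T) [[-> ->] | [q' /s_gen //]].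
exists v; split; first by rewrite e_sym.
move=> x; rewrite mem_s => /andP [xw xB]; apply/andP; split.
  by apply: contraNneq xB => <-.
rewrite e_sym; apply: contra xw => evx.
by have := forallP v_white x; rewrite evx xB.
Qed.

Lemma reverse_forcing_seq_reach S B : zstar_reach e S B ->
  forall s, reverse_forcing_seq B s -> exists s', reverse_forcing_seq S s'.
Proof.
elim=> [s S_s | B' v w _ IH vw s /(reverse_forcing_seq_force vw)]; first by exists s.
exact: IH.
Qed.

Lemma forcing_set_generic (x0 : T) S : zstar_forcing_set e S ->
  exists2 s, generic_Z_sequence e s & size s + #|S| = #|T|.
Proof.
move=> /reverse_forcing_seq_reach /(_ [::]) [|s [s_uniq s_white s_en s_gen]].
  by split => // [x | [|? ?] ? ? | [|? ?] ? ?] //; rewrite in_setC in_setT.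
exists s; last by rewrite -(card_uniqP s_uniq) (eq_card s_white) addnC cardsC.
split => //; have [-> | s_ne] := eqVneq s [::].
  have [t [t_GS _]] := GS_ordering_extend (isT : uniq [:: x0]) (@earlier_neighbor1 x0) isT.
  by exists t; rewrite prefix0s.
exact: GS_ordering_extend.
Qed.

End Graph.

Theorem theorem3p10 (T : finType) (e : rel T) (k : int) :
  simple_graph e -> connected_graph e -> (2 <= #|T|)%N ->
  [/\ ((exists s : seq T, GS_ordering e s /\ (#|F_leaves e s|%:Z <= k)%R) <->
       (exists S : {set T}, zstar_forcing_set e S /\ (#|S|%:Z <= k)%R)),
      ((exists S : {set T}, zstar_forcing_set e S /\ (#|S|%:Z <= k)%R) <->
       (exists s : seq T, generic_Z_sequence e s /\ (#|T|%:Z - k <= (size s)%:Z)%R)) &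
      ((exists s : seq T, GS_ordering e s /\ (#|F_leaves e s|%:Z <= k)%R) <->
       (exists s : seq T, generic_Z_sequence e s /\ (#|T|%:Z - k <= (size s)%:Z)%R))].
Proof.
move=> [e_sym e_irr] e_conn card_T.
have /card_gt0P [x0 _] : (0 < #|T|)%N by lia.
have leaves_forcing :
    (exists s, GS_ordering e s /\ (#|F_leaves e s|%:Z <= k)%R) ->
    (exists S, zstar_forcing_set e S /\ (#|S|%:Z <= k)%R).
  move=> [t [t_GS k_t]]; exists (F_leaves e t); split => //.
  by apply: F_leaves_forcing => // x; apply: has_neighbor_of_card.
have forcing_generic :
    (exists S, zstar_forcing_set e S /\ (#|S|%:Z <= k)%R) ->
    (exists s, generic_Z_sequence e s /\ (#|T|%:Z - k <= (size s)%:Z)%R).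
  move=> [S [S_forcing k_S]].
  have [s s_gen size_s] := forcing_set_generic e_sym e_irr e_conn x0 S_forcing.
  by exists s; split => //; lia.
have generic_leaves :
    (exists s, generic_Z_sequence e s /\ (#|T|%:Z - k <= (size s)%:Z)%R) ->
    (exists s, GS_ordering e s /\ (#|F_leaves e s|%:Z <= k)%R).
  move=> [s [[s_uniq [t [t_GS s_t]] s_gen] k_s]]; exists t; split => //.
  have bound : (#|F_leaves e t| + size s <= #|T|)%N :=
    leaves_add_generic_le e_sym e_irr t_GS s_t s_uniq s_gen.
  lia.
by split; split; tauto.
Qed.
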